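(* Let $P$ be a finite poset, $I\in\mathcal{IC}(P)$ and $x\in\nabla(I)-I$. Then $x\in\mathrm{Row}(I)$ if and only if $x\in\lceil I\rceil$.
   Context: All posets are finite. For a poset $P$, a subset $I\subseteq P$ is interval-closed if for all $x,y\in I$ and $z\in P$ with $x\le z\le y$ we have $z\in I$; $\mathcal{IC}(P)$ is the set of interval-closed subsets of $P$. For $x\in P$ the toggle $t_x:\mathcal{IC}(P)\to\mathcal{IC}(P)$ is defined by $t_x(I)=I\triangle\{x\}$ if $I\triangle\{x\}\in\mathcal{IC}(P)$ and $t_x(I)=I$ otherwise. Rowmotion is $\mathrm{Row}=t_{x_1}\circ t_{x_2}\circ\cdots\circ t_{x_N}:\mathcal{IC}(P)\to\mathcal{IC}(P)$, where $(x_1,\dots,x_N)$ is a linear extension of $P$ (so elements are toggled from the top of the poset down); this does not depend on the choice of linear extension. $\nabla(I)$ is the smallest order filter containing $I$, and the ceiling $\lceil I\rceil$ is the set of minimal elements of $\nabla(I)-I$. *)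

From mathcomp Require Import all_boot all_order.
Set Implicit Arguments. Unset Strict Implicit. Unset Printing Implicit Defensive.
Import Order.Theory.
Local Open Scope order_scope.

Section IC.
Variables (d : Order.disp_t) (P : finPOrderType d).

Definition interval_closed (I : {set P}) : bool :=
  [forall x in I, forall y in I, forall z, (x <= z) && (z <= y) ==> (z \in I)].

Definition toggle (x : P) (I : {set P}) : {set P} :=
  let J := if x \in I then I :\ x else x |: I in
  if interval_closed J then J else I.

Definition linear_extension (s : seq P) : Prop :=
  [/\ uniq s, forall x : P, x \in s &
      forall x y : P, x < y -> (index x s < index y s)%N].

Definition rowmotion (s : seq P) (I : {set P}) : {set P} :=
  foldr toggle I s.

Definition nabla (I : {set P}) : {set P} :=
  [set y | [exists x in I, x <= y]].

Definition ceiling (I : {set P}) : {set P} :=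
  let D := nabla I :\: I in
  [set y in D | [forall z in D, ~~ (z < y)]].

End IC.

From mathcomp Require Import all_boot all_order.
Set Implicit Arguments. Unset Strict Implicit. Unset Printing Implicit Defensive.
Import Order.Theory.
Local Open Scope order_scope.

(* Write the linear extension as s = s1 ++ x :: s2.  Rowmotion
   first applies the toggles of s2, producing an interval-closed set J; since
   every element below x precedes x in s, these toggles never touch the
   principal down-set of x, so J agrees with I on it.  The toggles of s1 do
   not touch x either, hence x lies in Row(I) iff toggling x adds it to J,
   i.e. iff x |: J is interval-closed.  For x in nabla J - J this happens
   exactly when x is a minimal element of nabla J - J, i.e. x is in the
   ceiling of J (lemma interval_closed_setU1).  Finally, membership of x in
   nabla and in the ceiling only depends on the down-set of x, so the ceilings
   of J and I agree at x. *)

Section IntervalClosedToggles.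
Variables (d : Order.disp_t) (P : finPOrderType d).
Implicit Types (I J : {set P}) (s : seq P) (x y : P).

Lemma interval_closedP I :
  reflect (forall u v z, u \in I -> v \in I -> u <= z -> z <= v -> z \in I)
          (interval_closed I).
Proof.
apply: (iffP idP).
- move=> /forall_inP IC u v z uI vI uz zv.
  by move: (IC u uI) => /forall_inP /(_ v vI) /forallP /(_ z); rewrite uz zv.
- move=> IC; apply/forall_inP => u uI; apply/forall_inP => v vI.
  by apply/forallP => z; apply/implyP => /andP [uz zv]; apply: IC uI vI uz zv.
Qed.

Lemma toggle_interval_closed y J :
  interval_closed J -> interval_closed (toggle y J).
Proof. by rewrite /toggle; case: ifP. Qed.

Lemma toggles_interval_closed s J :
  interval_closed J -> interval_closed (foldr (@toggle _ P) J s).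
Proof. by elim: s => //= y s IH /IH; apply: toggle_interval_closed. Qed.

Lemma toggle_other y x J : y != x -> (x \in toggle y J) = (x \in J).
Proof.
move=> yx; rewrite /toggle; case: ifP => // _; case: ifP => _.
- by rewrite in_setD1 eq_sym yx.
- by rewrite in_setU1 eq_sym (negbTE yx).
Qed.

Lemma toggles_other s x J :
  x \notin s -> (x \in foldr (@toggle _ P) J s) = (x \in J).
Proof.
elim: s => //= y s IH; rewrite in_cons negb_or => /andP [xy xs].
by rewrite toggle_other ?IH // eq_sym.
Qed.

Lemma mem_toggle_notin x J :
  x \notin J -> (x \in toggle x J) = interval_closed (x |: J).
Proof.
move=> xJ; rewrite /toggle (negbTE xJ).
by case: ifP => _; [rewrite setU11 | rewrite (negbTE xJ)].
Qed.

End IntervalClosedToggles.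

Section Ceiling.
Variables (d : Order.disp_t) (P : finPOrderType d).
Implicit Types (I J : {set P}) (x y z : P).

Lemma nablaP I y : reflect (exists2 b, b \in I & b <= y) (y \in nabla I).
Proof. by rewrite inE; apply: exists_inP. Qed.

Lemma mem_ceiling I x :
  (x \in ceiling I) =
  (x \in nabla I :\: I) && [forall z in nabla I :\: I, ~~ (z < x)].
Proof. by rewrite inE. Qed.

Lemma interval_closed_setU1 J x :
  interval_closed J -> x \in nabla J :\: J ->
  interval_closed (x |: J) = (x \in ceiling J).
Proof.
move=> /interval_closedP ICJ xD; have /setDP [/nablaP [a aJ ax] xJ] := xD.
rewrite mem_ceiling xD /=; apply/idP/forall_inP.
- move=> /interval_closedP ICxJ z /setDP [/nablaP [b bJ bz] zJ]; apply/negP => zx.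
  have : z \in x |: J by apply: (ICxJ b x) => //; rewrite ?setU11 ?in_setU1 ?bJ ?orbT ?ltW.
  by rewrite in_setU1 (lt_eqF zx) (negbTE zJ).
- move=> xmin; apply/interval_closedP => u v z.
  rewrite !in_setU1 => /predU1P [-> | uJ] /predU1P [-> | vJ] uz zv.
  + by rewrite (@le_anti _ _ z x) ?uz ?zv ?eqxx.
  + by rewrite (ICJ a v z aJ vJ) ?orbT // (le_trans ax uz).
  + have [-> | zx] := eqVneq z x; rewrite ?eqxx //=.
    apply/negPn/negP => zJ.
    have zD : z \in nabla J :\: J by rewrite inE zJ; apply/nablaP; exists u.
    by move: (xmin z zD); rewrite lt_neqAle zx zv.
  + by rewrite (ICJ u v z uJ vJ uz zv) orbT.
Qed.

Section DownSetLocality.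
Variables (I J : {set P}) (x : P).
Hypothesis agree : forall y, y <= x -> (y \in I) = (y \in J).

Lemma nabla_local z : z <= x -> (z \in nabla I) = (z \in nabla J).
Proof.
move=> zx; apply/nablaP/nablaP => -[b bK bz]; exists b => //.
  by rewrite -agree // (le_trans bz zx).
by rewrite agree // (le_trans bz zx).
Qed.

Lemma ceiling_local : (x \in ceiling I) = (x \in ceiling J).
Proof.
have downD z : z <= x -> (z \in nabla I :\: I) = (z \in nabla J :\: J).
  by move=> zx; rewrite !in_setD nabla_local // agree.
rewrite !mem_ceiling downD //; congr (_ && _); apply/forall_inP/forall_inP => min z zD;
  apply/negP => zx; [rewrite -downD ?ltW // in zD | rewrite downD ?ltW // in zD];
  by move: (min z zD); rewrite zx.
Qed.

End DownSetLocality.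

End Ceiling.

Section RowmotionSplit.
Variables (d : Order.disp_t) (P : finPOrderType d).

Lemma rowmotion_at (s : seq P) (I : {set P}) (x : P) :
  linear_extension s -> interval_closed I ->
  exists2 J : {set P}, interval_closed J /\
      (forall y, y <= x -> (y \in J) = (y \in I))
    & (x \in rowmotion s I) = (x \in toggle x J).
Proof.
case=> uniq_s mem_s sorted_s ICI.
move: uniq_s sorted_s; case/splitPr: (mem_s x) => s1 s2.
rewrite cat_uniq /= negb_or => /and3P [_ /andP [xs1 s1s2] /andP [xs2 _]].
move=> sorted_s; exists (foldr (@toggle _ P) I s2).
  split; first exact: toggles_interval_closed.
  move=> y; rewrite le_eqVlt => /predU1P [-> | yx]; first exact: toggles_other.
  apply: toggles_other; apply/negP => ys2.
  have ys1 : y \notin s1 by apply/negP => ys1; case/hasP: s1s2; exists y.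
  move: (sorted_s _ _ yx); rewrite !index_cat (negbTE xs1) (negbTE ys1) /=.
  by rewrite eqxx eq_sym (lt_eqF yx) addn0 ltnNge leq_addr.
by rewrite /rowmotion foldr_cat /= toggles_other.
Qed.

End RowmotionSplit.

Theorem lemma2 (d : Order.disp_t) (P : finPOrderType d) (s : seq P)
    (I : {set P}) (x : P) :
  linear_extension s -> interval_closed I -> x \in nabla I :\: I ->
  (x \in rowmotion s I) = (x \in ceiling I).
Proof.
move=> lin_s ICI xD.
have [J [ICJ agree] ->] := rowmotion_at x lin_s ICI.
have xJ : x \notin J by rewrite agree //; case/setDP: xD.
have xDJ : x \in nabla J :\: J by rewrite in_setD xJ (nabla_local agree) //; case/setDP: xD.
by rewrite mem_toggle_notin // interval_closed_setU1 // (ceiling_local agree).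
Qed.
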